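(* Almost surely, for all $1\le k\le\kappa$, $\mathbf w(e_k)\le\frac{2}{k+2}$. In particular $\kappa\le\frac{2n}{\ln n}$.
   Context: Configuration model: $(d_i^-)_{1\le i\le n}$, $(d_i^+)_{1\le i\le n}$ positive integers with $\sum_id_i^-=\sum_id_i^+=m$; each vertex $i\in V=\{1,\dots,n\}$ carries a set $E_i^+$ of $d_i^+$ tails and a set $E_i^-$ of $d_i^-$ heads; $\omega$ is a uniformly random bijection from tails to heads, $\omega(e)=f$ being an arc from the vertex of $e$ to that of $f$. Assume $\min_i\min(d_i^+,d_i^-)\ge2$; $\Delta:=\max_i\max(d_i^+,d_i^-)$, $h=\lfloor\frac{\ln n}{10\ln\Delta}\rfloor$, $t$ a positive integer, $w_{\min}=\frac{\ln n}{n}$. Exploration from a root $i\in V$: initially $\mathcal T=\{i\}$ and all tails/heads unmatched; $\partial_+\mathcal T$ ($\partial_-\mathcal T$) is the set of unmatched tails (heads) whose vertex lies in $\mathcal T$. For $e\in\partial_+\mathcal T$, the height $\mathbf h(e)$ is the number of vertices on the unique directed path in $\mathcal T$ from $i$ to the vertex of $e$ (including it), and the weight $\mathbf w(e)$ is the inverse product of the out-degrees of those vertices. Iterate: select, among $e\in\partial_+\mathcal T$ with $\mathbf h(e)<t-h$ and $\mathbf w(e)>w_{\min}$, one of maximal weight (ties broken by a fixed deterministic order); match it to a uniformly chosen unmatched head $f$; if $f\notin\partial_-\mathcal T$, add arc $ef$ and the vertex of $f$ to $\mathcal T$. Stop when no such tail exists; $\kappa$ is the total number of pairings, and $e_k$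 is the tail selected at step $k$ (with $\mathbf w(e_k)$ its weight when selected). *)

From HB Require Import structures.
From mathcomp Require Import all_boot all_order all_algebra.
From mathcomp Require Import fingroup perm.
From mathcomp Require Import reals exp.

Set Implicit Arguments.
Unset Strict Implicit.
Unset Printing Implicit Defensive.

Import Order.TTheory GRing.Theory Num.Theory.
Local Open Scope ring_scope.

(* Configuration model with n vertices and m half-edges of each kind.
   Tails and heads are both indexed by 'I_m; tv e (resp. hv f) is the vertex
   carrying tail e (resp. head f), so E_i^+ = tv^-1(i), E_i^- = hv^-1(i).
   A configuration omega is a bijection tails -> heads, i.e. a {perm 'I_m}. *)

Section Exploration.
Variable R : realType.
Variables n m : nat.
Variables (tv hv : 'I_m -> 'I_n).
Variable rk : {perm 'I_m}.     (* fixed deterministic tie-breaking order on tails *)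
Variable t : nat.
Variable root : 'I_n.
Variable omega : {perm 'I_m}.

Definition dout (i : 'I_n) : nat := #|[set e | tv e == i]|.
Definition din (i : 'I_n) : nat := #|[set f | hv f == i]|.
Definition Delta : nat := \max_(i : 'I_n) maxn (dout i) (din i).
Definition hpar : int :=
  Num.floor (ln (n%:R : R) / (10 * ln (Delta%:R : R))).
Definition wmin : R := ln (n%:R : R) / n%:R.

(* State of the exploration: tree vertex set, set of already paired tails,
   and for each tree vertex v the number of vertices on the tree path from
   the root to v (its height) and the product of out-degrees along it. *)
Record state := State {
  tree : {set 'I_n};
  matched : {set 'I_m};
  hgt : 'I_n -> nat;
  prd : 'I_n -> nat }.

Definition init : state :=
  State [set root] set0 (fun _ => 1%N) (fun _ => dout root).

Definition bdry_out (s : state) : {set 'I_m} :=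
  [set e | (e \notin matched s) && (tv e \in tree s)].
Definition bdry_in (s : state) : {set 'I_m} :=
  [set f | (f \notin [set omega e | e in matched s]) && (hv f \in tree s)].

Definition height (s : state) (e : 'I_m) : nat := hgt s (tv e).
Definition weight (s : state) (e : 'I_m) : R := ((prd s (tv e))%:R)^-1.

Definition eligible (s : state) (e : 'I_m) : bool :=
  [&& e \in bdry_out s, ((height s e)%:Z < t%:Z - hpar)%R & wmin < weight s e].

Definition select (s : state) : option 'I_m :=
  [pick e | eligible s e &&
     [forall e', eligible s e' ==>
        (weight s e' < weight s e) ||
        ((weight s e' == weight s e) && (rk e <= rk e')%N)]].

Definition step (s : state) (e : 'I_m) : state :=
  let f := omega e in
  if f \notin bdry_in s then
    State (hv f |: tree s) (e |: matched s)
      (fun v => if v == hv f then (height s e).+1 else hgt s v)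
      (fun v => if v == hv f then (prd s (tv e) * dout (hv f))%N else prd s v)
  else State (tree s) (e |: matched s) (hgt s) (prd s).

Fixpoint run (fuel : nat) (s : state) : seq ('I_m * R) :=
  if fuel is k.+1 then
    match select s with
    | Some e => (e, weight s e) :: run k (step s e)
    | None => [::]
    end
  else [::].

(* each step pairs a new tail, so m+1 steps of fuel suffice for the
   exploration to stop by itself *)
Definition trace : seq ('I_m * R) := run m.+1 init.
Definition kappa : nat := size trace.
Definition wsel : seq R := map snd trace.

End Exploration.

(* Selection is by maximal weight, and the tails revealed by a pairing weigh at
   most the paired tail, so selected weights decrease: when e_k is selected, the
   tails e_1, ..., e_k all lie on the tree with weight at least w(e_k).
   Conversely, charge every non-root tree vertex v of weight at least w to the
   tail that discovered it, whose weight is d_v >= 2 times that of v; comparing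
   the excesses over w of both families of weights shows that a tree whose root
   weighs 1/d_root carries at most 2/w - 2 tails of weight at least w. The
   argument is deterministic, so it holds for every configuration; and as the
   last selected weight exceeds w_min = ln n / n, it yields kappa ln n <= 2 n. *)

From mathcomp Require Import all_boot all_order all_algebra.
From mathcomp Require Import perm.
From mathcomp Require Import reals exp.
From mathcomp Require Import lra.
Import Order.TTheory GRing.Theory Num.Theory.
Local Open Scope ring_scope.

Lemma ler_sum_inj (R : numDomainType) (I J : finType) (A : {set I}) (B : {set J})
    (p : I -> J) (F : J -> R) :
  {in A &, injective p} -> {in A, forall i, p i \in B} ->
  {in B, forall j, 0 <= F j} ->
  \sum_(i in A) F (p i) <= \sum_(j in B) F j.
Proof.
move=> p_inj pAB F_ge0.
rewrite -(big_imset F p_inj) [leRHS](big_setID [set p i | i in A]).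
have -> : B :&: [set p i | i in A] = [set p i | i in A].
  by apply/setIidPr/subsetP => _ /imsetP [i Ai ->]; exact: pAB.
by rewrite lerDl sumr_ge0 // => j /setDP [Bj _]; exact: F_ge0.
Qed.

Lemma mul_le_of_ratio_lt (R : realFieldType) (a b K : R) :
  0 < b -> 0 <= K -> a / b < 2 / (K + 2) -> K * a <= 2 * b.
Proof.
move=> b_gt0 K_ge0; rewrite ltr_pdivrMr // mulrAC ltr_pdivlMr ?ltr_wpDl //.
nra.
Qed.

Section Exploration.
Set Implicit Arguments.
Unset Strict Implicit.
Variables (R : realType) (n m : nat) (tv hv : 'I_m -> 'I_n).
Variables (rk : {perm 'I_m}) (t : nat) (root : 'I_n) (omega : {perm 'I_m}).
Hypothesis dout_ge2 : forall i, (2 <= dout tv i)%N.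

Local Notation state := (state n m).
Local Notation dout := (dout tv).
Local Notation height := (height tv).
Local Notation weight := (weight R tv).
Local Notation eligible := (eligible R tv hv t).
Local Notation select := (select R tv hv rk t).
Local Notation step := (step tv hv omega).
Local Notation bdry_out := (bdry_out tv).
Local Notation run := (run R tv hv rk t omega).

Lemma dout_gt0 i : (0 < dout i)%N.
Proof. exact: leq_trans _ (dout_ge2 i). Qed.

Lemma dout_gt0R i : 0 < (dout i)%:R :> R.
Proof. by rewrite ltr0n dout_gt0. Qed.

Lemma sum_tails (M : nmodType) (V : {set 'I_n}) (F : 'I_n -> M) :
  \sum_(e in [set e | tv e \in V]) F (tv e) = \sum_(v in V) F v *+ dout v.
Proof.
rewrite (partition_big tv (fun v => v \in V)) => [|e]; last by rewrite inE.
apply: eq_bigr => v Vv; rewrite -sumr_const; apply: eq_big => [e|e /andP [_ /eqP ->] //].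
by rewrite !inE andb_idl // => /eqP ->.
Qed.

Lemma weighted_tails_bound (V : {set 'I_n}) (r : 'I_n) (om : 'I_n -> R)
    (p : 'I_n -> 'I_m) (w : R) :
  r \in V -> (dout r)%:R * om r = 1 -> {in V, forall v, w <= om v} ->
  {in V :\ r &, injective p} ->
  {in V :\ r, forall v, tv (p v) \in V /\ om (tv (p v)) = (dout v)%:R * om v} ->
  w * (#|[set e | tv e \in V]|%:R + 2) <= 2.
Proof.
move=> rV om_r w_le p_inj p_par.
have [w_lt0|w_ge0] := ltP w 0.
  by rewrite ltW // (lt_le_trans _ (ler0n R 2)) // pmulr_llt0 // ltr_wpDl.
set d := fun v => (dout v)%:R : R.
have d_ge2 v : 2 <= d v by rewrite /d (ler_nat R 2).
have surplus : \sum_(v in V :\ r) (d v * om v - w) <=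
               \sum_(e in [set e | tv e \in V]) (om (tv e) - w).
  under eq_bigr => v Vv do rewrite -(p_par v Vv).2.
  apply: ler_sum_inj => // [v /p_par [] | e]; rewrite inE // => Ve.
  by rewrite subr_ge0 w_le.
have card_tails : #|[set e | tv e \in V]|%:R = \sum_(v in V) d v :> R.
  rewrite -sum1_card natr_sum (sum_tails _ (fun=> 1)).
  by apply: eq_bigr => v _; rewrite /d -mulr_natl mulr1.
rewrite (sum_tails _ (fun v => om v - w)) (big_setD1 r rV) /= in surplus.
rewrite card_tails (big_setD1 r rV) /=.
set X := \sum_(v in V :\ r) d v.
have expand_tails : \sum_(v in V :\ r) (om v - w) *+ dout v =
                    \sum_(v in V :\ r) d v * om v - w * X.
  by rewrite /X mulr_sumr -sumrB; apply: eq_bigr => v _; rewrite -mulr_natr /d; lra.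
have few_vertices : \sum_(v in V :\ r) w <= w / 2 * X.
  rewrite /X mulr_sumr; apply: ler_sum => v _.
  by have := d_ge2 v; nra.
rewrite expand_tails sumrB -mulr_natr in surplus.
by have := d_ge2 r; rewrite /d; nra.
Qed.

(* [p v] is the tail whose pairing added [v] to the tree. *)
Record tree_inv (s : state) : Prop := TreeInv {
  root_in_tree : root \in tree s;
  prd_root : prd s root = dout root;
  prd_root_le : {in tree s, forall v, prd s root <= prd s v}%N;
  matched_in_tree : {in matched s, forall e, tv e \in tree s};
  parent_tails : exists2 p : 'I_n -> 'I_m, {in tree s :\ root &, injective p} &
    {in tree s :\ root, forall v,
      [/\ p v \in matched s, tv (p v) \in tree s & prd s v = prd s (tv (p v)) * dout v]}%N
}.

Lemma m_gt0 : (0 < m)%N.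
Proof.
apply: leq_trans (dout_gt0 root) _.
by apply: leq_trans (max_card _) _; rewrite card_ord.
Qed.

Lemma tree_inv_init : tree_inv (init tv root).
Proof.
split=> //= [|e|]; rewrite ?inE //.
by exists (fun=> Ordinal m_gt0) => v; rewrite !inE andNb.
Qed.

Lemma prd_gt0 s : tree_inv s -> {in tree s, forall v, 0 < prd s v}%N.
Proof.
by case=> _ prd_r prd_r_le _ _ v /prd_r_le; apply: leq_trans; rewrite prd_r dout_gt0.
Qed.

Variant step_spec (s : state) (e : 'I_m) : state -> Prop :=
| StepGrow x of x \notin tree s :
    step_spec s e (State (x |: tree s) (e |: matched s)
      (fun v => if v == x then (height s e).+1 else hgt s v)
      (fun v => if v == x then (prd s (tv e) * dout x)%N else prd s v))
| StepStay : step_spec s e (State (tree s) (e |: matched s) (hgt s) (prd s)).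

Lemma stepP s e : e \in bdry_out s -> step_spec s e (step s e).
Proof.
rewrite inE => /andP [e_unm _]; rewrite /step; case: ifP => [fresh|_]; last exact: StepStay.
apply: StepGrow; move: fresh; rewrite inE negb_and negbK.
by case/orP=> [/imsetP [e' e'_m /perm_inj e_e']|//]; move: e_unm; rewrite e_e' e'_m.
Qed.

Lemma matched_step s e : matched (step s e) = e |: matched s.
Proof. by rewrite /step; case: ifP. Qed.

Lemma step_old s e x : e \in bdry_out s -> x \in tree s ->
  [/\ x \in tree (step s e), prd (step s e) x = prd s x & hgt (step s e) x = hgt s x].
Proof.
case/stepP => [y y_new|] x_in //=.
have /negbTE -> : x != y by apply: contraNneq y_new => <-.
by rewrite !inE x_in orbT.
Qed.

Lemma prd_step_new s e x : e \in bdry_out s ->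
  x \in tree (step s e) -> x \notin tree s -> prd (step s e) x = (prd s (tv e) * dout x)%N.
Proof.
case/stepP => [y _|] /= x_in x_new; last by rewrite x_in in x_new.
by case/setU1P: x_in x_new => [->|->]; rewrite ?eqxx.
Qed.

Lemma tree_inv_step s e : tree_inv s -> e \in bdry_out s -> tree_inv (step s e).
Proof.
case=> root_in prd_r prd_r_le m_in [p p_inj p_par] e_bd.
have /andP [e_unm e_in] : (e \notin matched s) && (tv e \in tree s) by rewrite inE in e_bd.
have m_in' : {in e |: matched s, forall e', tv e' \in tree s}.
  by move=> e' /setU1P [->|/m_in].
case: (stepP e_bd) => [x x_new|]; last first.
  split=> //; exists p => // v /p_par [p_m p_in prd_v].
  by rewrite inE p_m orbT.
have old_neq v : v \in tree s -> (v == x) = false.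
  by move=> v_in; apply/negbTE; apply: contraNneq x_new => <-.
have p_ne_e v : v \in tree s :\ root -> (p v == e) = false.
  by case/p_par => p_m _ _; apply/negbTE; apply: contraNneq e_unm => <-.
split=> /=.
- by rewrite inE root_in orbT.
- by rewrite old_neq.
- move=> v; rewrite old_neq //; case/setU1P => [->|v_in]; last by rewrite old_neq ?prd_r_le.
  by rewrite eqxx (leq_trans (prd_r_le _ e_in)) // leq_pmulr ?dout_gt0.
- by move=> e' /m_in' e'_in; rewrite inE e'_in orbT.
exists (fun v => if v == x then e else p v).
- move=> v v' /setD1P [v_r /setU1P [-> | v_in]] /setD1P [v'_r /setU1P [-> | v'_in]] //;
    rewrite ?eqxx ?old_neq //.
  + by move/esym/eqP; rewrite p_ne_e // in_setD1 v'_r.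
  + by move/eqP; rewrite p_ne_e // in_setD1 v_r.
  + by apply: p_inj; rewrite in_setD1 ?v_r ?v'_r.
move=> v /setD1P [v_r /setU1P [-> | v_in]].
  by rewrite eqxx (old_neq _ e_in) !inE eqxx e_in orbT.
have /p_par [p_m p_in prd_v] : v \in tree s :\ root by rewrite in_setD1 v_r.
by rewrite !old_neq // !inE p_m p_in !orbT.
Qed.

Lemma tails_above_bound s w : tree_inv s -> w <= ((prd s root)%:R)^-1 ->
  w * (#|[set e | (tv e \in tree s) && (w <= weight s e)]|%:R + 2) <= 2.
Proof.
case=> root_in prd_r _ _ [p p_inj p_par] w_le_r.
set om := fun v => ((prd s v)%:R : R)^-1.
set V := [set v in tree s | w <= om v].
have -> : [set e | (tv e \in tree s) && (w <= weight s e)] = [set e | tv e \in V].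
  by apply/setP => e; rewrite !inE.
have V_tree : {subset V :\ root <= tree s :\ root}.
  by move=> v; rewrite !in_setD1 inE => /andP [-> /andP []].
apply: (@weighted_tails_bound V root om p).
- by rewrite inE root_in.
- by rewrite /om prd_r mulfV // gt_eqF // dout_gt0R.
- by move=> v; rewrite inE => /andP [].
- exact: sub_in2 p_inj.
move=> v Vv; have [_ p_in prd_v] := p_par v (V_tree v Vv).
have om_p : om (tv (p v)) = (dout v)%:R * om v.
  by rewrite /om prd_v natrM invfM mulrCA mulfV ?mulr1 // gt_eqF // dout_gt0R.
split=> //; rewrite inE p_in om_p /=.
move: Vv; rewrite in_setD1 inE => /and3P [_ _ w_le].
by apply: le_trans w_le _; rewrite ler_peMl ?invr_ge0 ?ler1n ?dout_gt0.
Qed.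

Lemma selectP s e : select s = Some e ->
  eligible s e /\ forall e', eligible s e' -> weight s e' <= weight s e.
Proof.
rewrite /select; case: pickP => // x /andP [x_el /forallP x_max] [<-].
split=> // e' /(implyP (x_max e')) /orP [/ltW //|/andP [/eqP -> _] //].
Qed.

(* [wl] is the weight of the previously selected tail. *)
Definition run_inv (s : state) (wl : R) : Prop :=
  [/\ tree_inv s, {in matched s, forall e, wl <= weight s e}
    & forall e, eligible s e -> weight s e <= wl].

Lemma run_inv_init : run_inv (init tv root) 1.
Proof.
split=> [|e|e _]; first exact: tree_inv_init; first by rewrite inE.
by rewrite /weight invf_le1 ?ler1n ?dout_gt0 ?dout_gt0R.
Qed.

Lemma selected_weight_le s wl e : run_inv s wl -> select s = Some e ->
  weight s e <= 2 / (#|matched s|.+1%:R + 2).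
Proof.
case=> I m_ge el_le /selectP [e_el _].
have /and3P [e_bd _ _] := e_el; rewrite inE in e_bd; case/andP: e_bd => e_unm e_in.
set T := [set e' | (tv e' \in tree s) && (weight s e <= weight s e')].
have matched_T : (#|matched s|.+1 <= #|T|)%N.
  have := cardsU1 e (matched s); rewrite e_unm add1n => <-.
  apply/subset_leq_card/subsetP => x.
  rewrite !inE => /predU1P [->|x_m]; first by rewrite e_in /=.
  by rewrite (matched_in_tree I) //= (le_trans (el_le _ e_el)) ?m_ge.
have w_ge0 : 0 <= weight s e by rewrite invr_ge0.
have w_le_r : weight s e <= ((prd s root)%:R)^-1.
  rewrite lef_pV2 ?posrE ?ltr0n ?(prd_gt0 I) ?(root_in_tree I) //.
  by rewrite ler_nat (prd_root_le I).
rewrite ler_pdivlMr ?ltr_wpDl //; apply: le_trans (tails_above_bound I w_le_r).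
by rewrite ler_wpM2l // lerD2r ler_nat.
Qed.

Lemma run_inv_step s wl e : run_inv s wl -> select s = Some e ->
  run_inv (step s e) (weight s e).
Proof.
case=> I m_ge el_le /selectP [e_el e_max].
have /and3P [e_bd _ _] := e_el.
have e_in : tv e \in tree s by move: (e_bd); rewrite inE => /andP [].
have weight_old x : tv x \in tree s -> weight (step s e) x = weight s x.
  by case/(step_old e_bd) => _ + _; rewrite /weight => ->.
split.
- exact: tree_inv_step.
- move=> x; rewrite matched_step => /setU1P [->|x_m]; first by rewrite weight_old.
  by rewrite weight_old ?(matched_in_tree I) // (le_trans (el_le _ e_el)) ?m_ge.
move=> x /and3P []; rewrite inE matched_step inE negb_or => /andP [/andP [_ x_unm] x_in'].
case: (boolP (tv x \in tree s)) => [x_in|x_new] x_h x_w.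
  rewrite weight_old //; apply: e_max; apply/and3P; split; last by rewrite -weight_old.
    by rewrite inE x_unm x_in.
  by move: x_h; rewrite /height; case: (step_old e_bd x_in) => _ _ ->.
rewrite /weight prd_step_new // lef_pV2 ?posrE ?ltr0n ?muln_gt0 ?(prd_gt0 I) ?dout_gt0 //.
by rewrite ler_nat leq_pmulr ?dout_gt0.
Qed.

Lemma run_weights fuel s wl : run_inv s wl ->
  forall i, (i < size (run fuel s))%N ->
  wmin R n < nth 0 (map snd (run fuel s)) i <= 2 / ((#|matched s| + i).+1%:R + 2).
Proof.
elim: fuel s wl => [//|fuel IH] s wl inv i /=.
case sel: (select s) => [e|//] /=.
have [/and3P [e_bd _ wmin_e] _] := selectP sel.
case: i => [_|i i_lt] /=; first by rewrite addn0 wmin_e (selected_weight_le inv sel).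
have := IH _ _ (run_inv_step inv sel) i i_lt.
by move: e_bd; rewrite inE matched_step cardsU1 => /andP [-> _]; rewrite add1n addSnnS.
Qed.

Lemma trace_weights i : (i < kappa R tv hv rk t root omega)%N ->
  wmin R n < nth 0 (wsel R tv hv rk t root omega) i <= 2 / (i.+1%:R + 2).
Proof. by move/(run_weights run_inv_init); rewrite cards0 add0n. Qed.
End Exploration.

Theorem lemma3 (R : realType) (n m : nat) (tv hv : 'I_m -> 'I_n)
  (rk : {perm 'I_m}) (t : nat) (root : 'I_n) (omega : {perm 'I_m}) :
  (forall i : 'I_n, (2 <= dout tv i)%N) ->
  (forall i : 'I_n, (2 <= din hv i)%N) ->
  (0 < t)%N ->
  (forall k : nat, (1 <= k <= kappa R tv hv rk t root omega)%N ->
     nth 0 (wsel R tv hv rk t root omega) k.-1 <= 2 / (k%:R + 2)) /\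
  (kappa R tv hv rk t root omega)%:R * ln (n%:R : R) <= 2 * n%:R.
Proof.
move=> dout_ge2 _ _.
have weights := @trace_weights R n m tv hv rk t root omega dout_ge2.
set K := kappa R tv hv rk t root omega in weights *.
split=> [k /andP [k_ge1 k_le]|].
  have k_lt : (k.-1 < K)%N by rewrite prednK.
  by have /andP [_] := weights _ k_lt; rewrite prednK.
case: K weights => [|k] weights; first by rewrite mul0r mulr_ge0.
have /andP [wmin_lt le_ratio] := weights k (ltnSn k).
apply: mul_le_of_ratio_lt; rewrite ?ltr0n ?(leq_ltn_trans _ (ltn_ord root)) //.
exact: lt_le_trans wmin_lt le_ratio.
Qed.
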